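(* There exists a function $I(y,y')$, smooth on $\{(y,y'):0<y'<y\}$, such that $$G_{L}(y,y')=\mathbf{1}_{(0,\infty)}(y-y')\frac{Q(y)}{Q(y')}I(y,y'),\qquad G_{iL}(y,y')=\mathbf{1}_{(0,\infty)}(y-y')\frac{Q(y)}{Q(y')}$$ are the outgoing Green's functions of $L_Q$ and of $i^{-1}L_Qi$ respectively (acting on real-valued functions), i.e. $L_Q(G_L(\cdot,y'))=\delta_{y'}$, $i^{-1}L_Qi(G_{iL}(\cdot,y'))=\delta_{y'}$, and both vanish for $0<y<y'$; and $I$ has the following properties. (1) For every integer $k\ge0$ and $0<y'<y$: $|I(y,y')|\lesssim 1+\langle y'\rangle^{-2}\log\big(2+\frac{\langle y\rangle}{\langle y'\rangle}\big)$; $|y\partial_yI(y,y')|\lesssim \frac{y-y'}{y}\min\{\frac{y^2}{\langle y\rangle^2},\langle y'\rangle^{-2}\}$; for $k\ge2$, $|(y\partial_y)^kI(y,y')|\lesssim_k\frac{y^2}{1+y^4}\big(1+\langle y'\rangle^{-2}\log\big(2+\frac{\langle y\rangle}{\langle y'\rangle}\big)\big)$. (2) $\lim_{y-y'\to0^+}I(y,y')=1$ and $\lim_{y-y'\to0^+}y\partial_yI(y,y')=0$. Moreover, setting $I^{(k)}(y)=\lim_{y'\to y^-}(y\partial_y)^kI(y,y')$, for all $k\ge2$ and $\ell\ge0$ one has $|I^{(k)}(y)|_\ell\lesssim_{k,\ell}\frac{y^2}{1+y^4}$.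
   Context: $Q(y)=\frac{\sqrt8}{1+y^2}$, $A_\theta[Q](y)=-\frac{2y^2}{1+y^2}$, $\langle a\rangle=(1+a^2)^{1/2}$. For real-valued $u$ on $(0,\infty)$: $L_Qu=\partial_yu-\frac{A_\theta[Q]}{y}u+\frac{Q}{y}\int_0^yQu\,y'dy'$ and $i^{-1}L_Q(iu)=\partial_yu-\frac{A_\theta[Q]}{y}u$. The outgoing Green's function of a linear operator $T$ acting on real functions of $y\in(0,\infty)$ is $G(y,y')$ with $T(G(\cdot,y'))=\delta_{y'}$ and $G(y,y')=0$ for $0<y<y'$. For a function $f$ and integer $\ell\ge0$, $|f|_\ell(y)=\sup_{0\le j\le\ell}|y^j\partial_y^jf(y)|$. *)

From Stdlib Require Import Reals.
From Coquelicot Require Import Coquelicot.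
Open Scope R_scope.

Definition Q (y : R) : R := sqrt 8 / (1 + y ^ 2).
Definition Atheta (y : R) : R := - (2 * y ^ 2) / (1 + y ^ 2).
Definition jb (a : R) : R := sqrt (1 + a ^ 2).

Definition smooth1 (phi : R -> R) : Prop := forall (n : nat) (x : R), ex_derive_n phi n x.
Definition supported_in (phi : R -> R) (a b : R) : Prop :=
  forall y, y < a \/ b < y -> phi y = 0.

(* Distributional identity  L_Q u = delta_{y0}  on (0,oo):
   for every test function phi supported in [a,b] (0<a<b),
   <L_Q u, phi> = int u (-phi' - (A/y) phi) dy + int (Q/y) phi(y) (int_0^y Q u s ds) dy
               = phi(y0). *)
Definition LQ_eq_delta (u : R -> R) (y0 : R) : Prop :=
  forall (phi : R -> R) (a b : R), 0 < a -> a < b -> smooth1 phi -> supported_in phi a b ->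
    (forall y, 0 <= y <= b -> ex_RInt (fun s => Q s * u s * s) 0 y) /\
    ex_RInt (fun y => u y * (- Derive phi y - Atheta y / y * phi y)
                      + Q y / y * phi y * RInt (fun s => Q s * u s * s) 0 y) a b /\
    RInt (fun y => u y * (- Derive phi y - Atheta y / y * phi y)
                   + Q y / y * phi y * RInt (fun s => Q s * u s * s) 0 y) a b = phi y0.

(* Distributional identity  i^{-1} L_Q (i u) = (d/dy - A/y) u = delta_{y0}  on (0,oo). *)
Definition iLQ_eq_delta (u : R -> R) (y0 : R) : Prop :=
  forall (phi : R -> R) (a b : R), 0 < a -> a < b -> smooth1 phi -> supported_in phi a b ->
    ex_RInt (fun y => u y * (- Derive phi y - Atheta y / y * phi y)) a b /\
    RInt (fun y => u y * (- Derive phi y - Atheta y / y * phi y)) a b = phi y0.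

Definition outgoing_Green_LQ (G : R -> R -> R) : Prop :=
  forall y', 0 < y' -> LQ_eq_delta (fun y => G y y') y' /\ (forall y, 0 < y < y' -> G y y' = 0).
Definition outgoing_Green_iLQ (G : R -> R -> R) : Prop :=
  forall y', 0 < y' -> iLQ_eq_delta (fun y => G y y') y' /\ (forall y, 0 < y < y' -> G y y' = 0).

Definition ind_pos (t : R) : R := if Rlt_dec 0 t then 1 else 0.

Definition G_L (I : R -> R -> R) (y y' : R) : R := ind_pos (y - y') * (Q y / Q y') * I y y'.
Definition G_iL (y y' : R) : R := ind_pos (y - y') * (Q y / Q y').

Fixpoint Ck_on (k : nat) (U : R -> R -> Prop) (f : R -> R -> R) : Prop :=
  (forall x y, U x y -> continuous (fun p : R * R => f (fst p) (snd p)) (x, y)) /\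
  match k with
  | O => True
  | S k' =>
      (forall x y, U x y -> ex_derive (fun t => f t y) x /\ ex_derive (fun t => f x t) y) /\
      Ck_on k' U (fun x y => Derive (fun t => f t y) x) /\
      Ck_on k' U (fun x y => Derive (fun t => f x t) y)
  end.
Definition smooth_on (U : R -> R -> Prop) (f : R -> R -> R) : Prop := forall k, Ck_on k U f.

Definition yDy (f : R -> R -> R) : R -> R -> R := fun y y' => y * Derive (fun t => f t y') y.
Definition yDy_iter (k : nat) (f : R -> R -> R) : R -> R -> R := Nat.iter k yDy f.

Definition wlog (y y' : R) : R := 1 + / (jb y') ^ 2 * ln (2 + jb y / jb y').

From Stdlib Require Import Reals Lra Lia Psatz List.
From Coquelicot Require Import Coquelicot.
Open Scope R_scope.
Import ListNotations.

(* Conjugating by [Q], which spans the kernel of [d/dy - A_theta[Q]/y], turns [L_Q] into a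
   local second-order equation: with [D = y d/dy I] the nonlocal term becomes [D], and
   [y d/dy D = -2 S I] where [S = y^2 Q^2 / 2 = 4 y^2 / (1 + y^2)^2].  The solutions of
   [(y d/dy)^2 I + 2 S I = 0] are spanned by [F = 1 - 2 / (1 + y^2)] and [1 - F log y], so the
   solution with [I = 1] and [D = 0] at [y = y'] is explicit:
     I(y, y') = F(y) F(y') + S(y') (1 - F(y) log (y / y')).
   All estimates are read off this formula.  For [k >= 2],
   [(y d/dy)^k I = A_k I + B_k D] where [A_k], [B_k] are finite sums of [c y^a / (1 + y^2)^n]
   with [2 <= a] and [a + 2 <= 2 n]; such sums, and [y^j] times their [j]-th derivatives,
   are [O(y^2 / (1 + y^4))]. *)

Definition quadrant (x y : R) : Prop := 0 < x /\ 0 < y.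

Lemma locally_pos (x : R) : 0 < x -> locally x (fun t => 0 < t).
Proof. exact (open_gt 0 x). Qed.

Lemma locally_quadrant (x y : R) :
  quadrant x y -> locally (x, y) (fun p : R * R => quadrant (fst p) (snd p)).
Proof.
  intros [Hx Hy].
  destruct (locally_pos x Hx) as [ex Hex], (locally_pos y Hy) as [ey Hey].
  exists (mkposreal _ (Rmin_pos _ _ (cond_pos ex) (cond_pos ey))).
  intros [a b] [Ha Hb]; split.
  - apply Hex. eapply Rlt_le_trans; [exact Ha | apply Rmin_l].
  - apply Hey. eapply Rlt_le_trans; [exact Hb | apply Rmin_r].
Qed.

Lemma ex_derive_continuous_R (f : R -> R) (x : R) : ex_derive f x -> continuous f x.
Proof. exact (ex_derive_continuous f x). Qed.

Lemma one_plus_sq_pos (y : R) : 0 < 1 + y ^ 2.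
Proof. nra. Qed.

Inductive atom : (R -> R) -> Prop :=
| atom_id : atom (fun x => x)
| atom_ln : atom ln
| atom_inv : atom Rinv
| atom_bump : atom (fun x => / (1 + x ^ 2)).

Inductive elem : (R -> R -> R) -> Prop :=
| elem_const c : elem (fun _ _ => c)
| elem_fst g : atom g -> elem (fun x _ => g x)
| elem_snd g : atom g -> elem (fun _ y => g y)
| elem_plus f g : elem f -> elem g -> elem (fun x y => f x y + g x y)
| elem_mult f g : elem f -> elem g -> elem (fun x y => f x y * g x y)
| elem_ext f g : elem f -> (forall x y, quadrant x y -> f x y = g x y) -> elem g.

Lemma atom_derive (g : R -> R) : atom g ->
  exists g', (forall x, 0 < x -> is_derive g x (g' x)) /\
             elem (fun x _ => g' x) /\ elem (fun _ y => g' y).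
Proof.
  destruct 1.
  - exists (fun _ => 1). split; [intros; auto_derive; auto | split; apply elem_const].
  - exists Rinv. split; [intros; auto_derive; [lra | field; lra] |].
    split; [apply elem_fst | apply elem_snd]; constructor.
  - exists (fun x => -1 * (/ x * / x)). split; [intros; auto_derive; [lra | field; lra] |].
    split.
    + exact (elem_mult _ _ (elem_const _)
               (elem_mult _ _ (elem_fst _ atom_inv) (elem_fst _ atom_inv))).
    + exact (elem_mult _ _ (elem_const _)
               (elem_mult _ _ (elem_snd _ atom_inv) (elem_snd _ atom_inv))).
  - exists (fun x => -2 * x * (/ (1 + x ^ 2) * / (1 + x ^ 2))).
    split; [intros x _; pose proof (one_plus_sq_pos x); auto_derive; [lra | field; lra] |].
    split.
    + exact (elem_mult _ _ (elem_mult _ _ (elem_const _) (elem_fst _ atom_id))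
               (elem_mult _ _ (elem_fst _ atom_bump) (elem_fst _ atom_bump))).
    + exact (elem_mult _ _ (elem_mult _ _ (elem_const _) (elem_snd _ atom_id))
               (elem_mult _ _ (elem_snd _ atom_bump) (elem_snd _ atom_bump))).
Qed.

Lemma atom_continuous (g : R -> R) (x : R) : atom g -> 0 < x -> continuous g x.
Proof.
  intros Hg Hx. destruct (atom_derive g Hg) as [g' [Hd _]].
  apply ex_derive_continuous_R. exists (g' x). now apply Hd.
Qed.

Lemma elem_continuous (f : R -> R -> R) : elem f ->
  forall x y, quadrant x y -> continuous (fun p : R * R => f (fst p) (snd p)) (x, y).
Proof.
  induction 1 as [c | g Hg | g Hg | f g _ IHf _ IHg | f g _ IHf _ IHg | f g _ IHf Hfg];
    intros x y Hxy.
  - apply continuous_const.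
  - apply (continuous_comp fst g); [apply continuous_fst | apply atom_continuous, Hxy; auto].
  - apply (continuous_comp snd g); [apply continuous_snd | apply atom_continuous, Hxy; auto].
  - apply (continuous_plus (fun p : R * R => f (fst p) (snd p))); auto.
  - apply (continuous_mult (fun p : R * R => f (fst p) (snd p))); auto.
  - apply (continuous_ext_loc _ (fun p : R * R => f (fst p) (snd p))); auto.
    destruct (locally_quadrant x y Hxy) as [e He].
    exists e. intros [a b] Hab. apply Hfg, (He (a, b) Hab).
Qed.

Lemma elem_Derive_const (c h : R -> R -> R) : elem (fun x y => Derive (fun _ => c x y) (h x y)).
Proof. apply (elem_ext _ _ (elem_const 0)). intros; symmetry; apply Derive_const. Qed.

Lemma elem_partials (f : R -> R -> R) : elem f ->
  (forall x y, quadrant x y -> ex_derive (fun t => f t y) x /\ ex_derive (fun t => f x t) y) /\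
  elem (fun x y => Derive (fun t => f t y) x) /\
  elem (fun x y => Derive (fun t => f x t) y).
Proof.
  pose proof elem_Derive_const as Hzero.
  induction 1 as [c | g Hg | g Hg | f g _ [Ef [Xf Yf]] _ [Eg [Xg Yg]]
                 | f g Hf [Ef [Xf Yf]] Hg [Eg [Xg Yg]] | f g _ [Ef [Xf Yf]] Hfg].
  - split; [intros; split; apply ex_derive_const |].
    split; [exact (Hzero (fun _ _ => c) (fun x _ => x))
           | exact (Hzero (fun _ _ => c) (fun _ y => y))].
  - destruct (atom_derive g Hg) as [g' [Hd [Hx _]]].
    split; [intros x y [Hx0 _]; split; [exists (g' x); auto | apply ex_derive_const] |].
    split; [| exact (Hzero (fun x _ => g x) (fun _ y => y))].
    apply (elem_ext _ _ Hx). intros x y [Hx0 _]. symmetry. apply is_derive_unique; auto.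
  - destruct (atom_derive g Hg) as [g' [Hd [_ Hy]]].
    split; [intros x y [_ Hy0]; split; [apply ex_derive_const | exists (g' y); auto] |].
    split; [exact (Hzero (fun _ y => g y) (fun x _ => x)) |].
    apply (elem_ext _ _ Hy). intros x y [_ Hy0]. symmetry. apply is_derive_unique; auto.
  - split.
    { intros x y Hxy. destruct (Ef x y Hxy), (Eg x y Hxy).
      split; [apply (ex_derive_plus (fun t => f t y)) | apply (ex_derive_plus (fun t => f x t))];
        auto. }
    split.
    + apply (elem_ext _ _ (elem_plus _ _ Xf Xg)). intros x y Hxy.
      destruct (Ef x y Hxy), (Eg x y Hxy). symmetry. now apply (Derive_plus (fun t => f t y)).
    + apply (elem_ext _ _ (elem_plus _ _ Yf Yg)). intros x y Hxy.
      destruct (Ef x y Hxy), (Eg x y Hxy). symmetry. now apply (Derive_plus (fun t => f x t)).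
  - split.
    { intros x y Hxy. destruct (Ef x y Hxy), (Eg x y Hxy). split; now apply ex_derive_mult. }
    split.
    + apply (elem_ext _ _ (elem_plus _ _ (elem_mult _ _ Xf Hg) (elem_mult _ _ Hf Xg))).
      intros x y Hxy. destruct (Ef x y Hxy), (Eg x y Hxy).
      symmetry. now apply (Derive_mult (fun t => f t y) (fun t => g t y)).
    + apply (elem_ext _ _ (elem_plus _ _ (elem_mult _ _ Yf Hg) (elem_mult _ _ Hf Yg))).
      intros x y Hxy. destruct (Ef x y Hxy), (Eg x y Hxy).
      symmetry. now apply (Derive_mult (fun t => f x t) (fun t => g x t)).
  - assert (Lx : forall x y, quadrant x y -> locally x (fun t => f t y = g t y)).
    { intros x y [Hx Hy]. destruct (locally_pos x Hx) as [e He].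
      exists e. intros t Ht. apply Hfg. split; auto. }
    assert (Ly : forall x y, quadrant x y -> locally y (fun t => f x t = g x t)).
    { intros x y [Hx Hy]. destruct (locally_pos y Hy) as [e He].
      exists e. intros t Ht. apply Hfg. split; auto. }
    split.
    { intros x y Hxy. destruct (Ef x y Hxy).
      split; [apply (ex_derive_ext_loc (fun t => f t y))
             | apply (ex_derive_ext_loc (fun t => f x t))];
        auto. }
    split; [apply (elem_ext _ _ Xf) | apply (elem_ext _ _ Yf)];
      intros x y Hxy; apply Derive_ext_loc; auto.
Qed.

Lemma elem_Ck (k : nat) (U : R -> R -> Prop) (f : R -> R -> R) :
  (forall x y, U x y -> quadrant x y) -> elem f -> Ck_on k U f.
Proof.
  intros HU. revert f. induction k as [|k IHk]; intros f Hf; simpl; split;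
    try (intros x y Hxy; apply elem_continuous; auto); auto.
  destruct (elem_partials f Hf) as [E [X Y]]. split; [intros x y Hxy; apply E; auto |].
  split; apply IHk; assumption.
Qed.

Lemma is_RInt_zero (a b : R) : is_RInt (fun _ => 0) a b 0.
Proof.
  pose proof (is_RInt_const a b 0) as H.
  unfold scal in H; simpl in H; unfold mult in H; simpl in H.
  now rewrite Rmult_0_r in H.
Qed.

Lemma continuous_eq0_of_approx (phi : R -> R) (c : R) : continuous phi c ->
  (forall e, 0 < e -> exists t, Rabs (t - c) < e /\ phi t = 0) -> phi c = 0.
Proof.
  intros Hc Happrox. destruct (Req_dec (phi c) 0) as [E|E]; auto. exfalso.
  assert (Hp : 0 < Rabs (phi c)) by now apply Rabs_pos_lt.
  destruct (Hc (ball (phi c) (mkposreal _ Hp))) as [d Hd].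
  { now exists (mkposreal _ Hp). }
  destruct (Happrox d (cond_pos d)) as [t [Ht Ht0]].
  specialize (Hd t Ht). rewrite Ht0 in Hd.
  change (Rabs (0 - phi c) < Rabs (phi c)) in Hd.
  rewrite Rminus_0_l, Rabs_Ropp in Hd. lra.
Qed.

Lemma smooth1_ex_derive (phi : R -> R) (x : R) : smooth1 phi -> ex_derive phi x.
Proof. intros H. exact (H 1%nat x). Qed.

Lemma smooth1_continuous (phi : R -> R) (x : R) : smooth1 phi -> continuous phi x.
Proof. intros H. now apply ex_derive_continuous_R, smooth1_ex_derive. Qed.

Lemma smooth1_continuous_Derive (phi : R -> R) (x : R) : smooth1 phi -> continuous (Derive phi) x.
Proof. intros H. apply ex_derive_continuous_R. exact (H 2%nat x). Qed.

Lemma supported_in_endpoints (phi : R -> R) (a b : R) :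
  smooth1 phi -> supported_in phi a b -> phi a = 0 /\ phi b = 0.
Proof.
  intros Hsm Hsu. split; apply continuous_eq0_of_approx; try now apply smooth1_continuous.
  - intros e He. exists (a - e / 2). split; [rewrite Rabs_left; lra | apply Hsu; lra].
  - intros e He. exists (b + e / 2). split; [rewrite Rabs_right; lra | apply Hsu; lra].
Qed.

(* The integrand [H] is the derivative of [-1_{t > y0} V phi], whose jump at [y0] is [-phi y0]. *)
Lemma is_RInt_test_jump (phi V V' H : R -> R) (a b y0 : R) :
  a < b -> smooth1 phi -> supported_in phi a b ->
  (forall t, 0 < t -> is_derive V t (V' t)) -> (forall t, 0 < t -> continuous V' t) ->
  0 < a -> 0 < y0 -> V y0 = 1 ->
  (forall t, a < t < y0 -> H t = 0) ->
  (forall t, y0 < t < b -> H t = - (V' t * phi t + V t * Derive phi t)) ->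
  is_RInt H a b (phi y0).
Proof.
  intros Hab Hsm Hsu HV HV' Ha Hy0 V1 Hleft Hright.
  destruct (supported_in_endpoints phi a b Hsm Hsu) as [Pa Pb].
  destruct (Rle_dec b y0) as [Hb|Hb].
  - replace (phi y0) with 0.
    2:{ destruct (Req_dec b y0) as [E|E]; [subst; auto | symmetry; apply Hsu; lra]. }
    apply (is_RInt_ext (fun _ => 0)); [| apply is_RInt_zero].
    intros t Ht. rewrite Rmin_left, Rmax_right in Ht by lra. symmetry; apply Hleft; lra.
  - set (c := Rmax a y0).
    assert (Hc : a <= c /\ y0 <= c /\ c < b)
      by (split; [apply Rmax_l | split; [apply Rmax_r | apply Rmax_lub_lt; lra]]).
    set (F := fun t => - (V t * phi t)).
    assert (Iac : is_RInt H a c 0).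
    { apply (is_RInt_ext (fun _ => 0)); [| apply is_RInt_zero].
      intros t Ht. rewrite Rmin_left, Rmax_right in Ht by lra. symmetry. apply Hleft.
      unfold c in Ht. destruct (Rle_dec a y0).
      - rewrite Rmax_right in Ht; lra.
      - rewrite Rmax_left in Ht; lra. }
    assert (Icb : is_RInt H c b (minus (F b) (F c))).
    { apply (is_RInt_ext (fun t => - (V' t * phi t + V t * Derive phi t))).
      { intros t Ht. rewrite Rmin_left, Rmax_right in Ht by lra. symmetry. apply Hright; lra. }
      apply (is_RInt_derive F); intros t Ht; rewrite Rmin_left, Rmax_right in Ht by lra.
      - apply (is_derive_opp (fun t => V t * phi t)), Derive.is_derive_mult.
        + apply HV; lra.
        + now apply Derive_correct, smooth1_ex_derive.
      - apply (continuous_opp (fun t => V' t * phi t + V t * Derive phi t)).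
        apply (continuous_plus (fun t => V' t * phi t)).
        + apply (continuous_mult V'); [apply HV'; lra | now apply smooth1_continuous].
        + apply (continuous_mult V); [| now apply smooth1_continuous_Derive].
          apply ex_derive_continuous_R. exists (V' t). apply HV; lra. }
    replace (phi y0) with (plus 0 (minus (F b) (F c))) by
      (unfold F, c, minus, plus, opp; simpl; rewrite Pb;
       destruct (Rle_dec a y0);
       [rewrite Rmax_right, V1 by lra; ring
       | rewrite Rmax_left, Pa, (Hsu y0) by lra; ring]).
    exact (is_RInt_Chasles H a c b _ _ Iac Icb).
Qed.

Definition F_Q (y : R) : R := 1 - 2 / (1 + y ^ 2).
Definition S_Q (y : R) : R := 4 * y ^ 2 / (1 + y ^ 2) ^ 2.

Definition I_Q (y y' : R) : R :=
  F_Q y * F_Q y' + S_Q y' * (1 - F_Q y * (ln y - ln y')).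
Definition D_Q (y y' : R) : R :=
  S_Q y * F_Q y' - S_Q y' * F_Q y - S_Q y * S_Q y' * (ln y - ln y').

Lemma I_Q_diag (y : R) : I_Q y y = 1.
Proof.
  unfold I_Q, F_Q, S_Q. rewrite Rminus_diag. pose proof (one_plus_sq_pos y). field. lra.
Qed.

Lemma D_Q_diag (y : R) : D_Q y y = 0.
Proof. unfold D_Q. rewrite Rminus_diag. ring. Qed.

Lemma is_derive_I_Q (y y' : R) : 0 < y -> is_derive (fun t => I_Q t y') y (D_Q y y' / y).
Proof.
  intros Hy. unfold I_Q, D_Q, F_Q, S_Q.
  pose proof (one_plus_sq_pos y). pose proof (one_plus_sq_pos y').
  auto_derive; [repeat split; nra | field; repeat split; nra].
Qed.

Lemma is_derive_D_Q (y y' : R) : 0 < y ->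
  is_derive (fun t => D_Q t y') y (-2 * S_Q y * I_Q y y' / y).
Proof.
  intros Hy. unfold I_Q, D_Q, F_Q, S_Q.
  pose proof (one_plus_sq_pos y). pose proof (one_plus_sq_pos y').
  auto_derive; [repeat split; nra | field; repeat split; nra].
Qed.

Lemma yDy_I_Q (y y' : R) : 0 < y -> yDy I_Q y y' = D_Q y y'.
Proof.
  intros Hy. unfold yDy.
  replace (Derive (fun t => I_Q t y') y) with (D_Q y y' / y)
    by (symmetry; apply is_derive_unique, is_derive_I_Q, Hy).
  field. lra.
Qed.

Lemma elem_F_Q_fst : elem (fun x _ => F_Q x).
Proof.
  apply (elem_ext _ _ (elem_plus _ _ (elem_const 1)
           (elem_mult _ _ (elem_const (-2)) (elem_fst _ atom_bump)))).
  intros x _ _. unfold F_Q. field. pose proof (one_plus_sq_pos x). lra.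
Qed.

Lemma elem_F_Q_snd : elem (fun _ y => F_Q y).
Proof.
  apply (elem_ext _ _ (elem_plus _ _ (elem_const 1)
           (elem_mult _ _ (elem_const (-2)) (elem_snd _ atom_bump)))).
  intros _ y _. unfold F_Q. field. pose proof (one_plus_sq_pos y). lra.
Qed.

Lemma elem_S_Q_fst : elem (fun x _ => S_Q x).
Proof.
  apply (elem_ext _ _ (elem_mult _ _ (elem_const 4)
           (elem_mult _ _ (elem_mult _ _ (elem_fst _ atom_id) (elem_fst _ atom_id))
                          (elem_mult _ _ (elem_fst _ atom_bump) (elem_fst _ atom_bump))))).
  intros x _ _. unfold S_Q. field. pose proof (one_plus_sq_pos x). lra.
Qed.

Lemma elem_S_Q_snd : elem (fun _ y => S_Q y).
Proof.
  apply (elem_ext _ _ (elem_mult _ _ (elem_const 4)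
           (elem_mult _ _ (elem_mult _ _ (elem_snd _ atom_id) (elem_snd _ atom_id))
                          (elem_mult _ _ (elem_snd _ atom_bump) (elem_snd _ atom_bump))))).
  intros _ y _. unfold S_Q. field. pose proof (one_plus_sq_pos y). lra.
Qed.

Lemma elem_log_ratio : elem (fun x y => ln x - ln y).
Proof.
  apply (elem_ext _ _ (elem_plus _ _ (elem_fst _ atom_ln)
           (elem_mult _ _ (elem_const (-1)) (elem_snd _ atom_ln)))).
  intros; ring.
Qed.

Lemma elem_I_Q : elem I_Q.
Proof.
  apply (elem_ext _ _ (elem_plus _ _ (elem_mult _ _ elem_F_Q_fst elem_F_Q_snd)
     (elem_mult _ _ elem_S_Q_snd (elem_plus _ _ (elem_const 1)
        (elem_mult _ _ (elem_const (-1)) (elem_mult _ _ elem_F_Q_fst elem_log_ratio)))))).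
  intros; unfold I_Q; ring.
Qed.

Lemma elem_D_Q : elem D_Q.
Proof.
  apply (elem_ext _ _ (elem_plus _ _ (elem_mult _ _ elem_S_Q_fst elem_F_Q_snd)
     (elem_plus _ _ (elem_mult _ _ (elem_const (-1)) (elem_mult _ _ elem_S_Q_snd elem_F_Q_fst))
        (elem_mult _ _ (elem_const (-1))
           (elem_mult _ _ (elem_mult _ _ elem_S_Q_fst elem_S_Q_snd) elem_log_ratio))))).
  intros; unfold D_Q; ring.
Qed.

Lemma Q_pos (y : R) : 0 < Q y.
Proof.
  unfold Q. apply Rdiv_lt_0_compat; [apply sqrt_lt_R0; lra | apply one_plus_sq_pos].
Qed.

Lemma Q_sq_mul (y : R) : 0 < y -> Q y * Q y * y = 2 * S_Q y / y.
Proof.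
  intros Hy. unfold Q, S_Q. pose proof (one_plus_sq_pos y).
  replace (sqrt 8 / (1 + y ^ 2) * (sqrt 8 / (1 + y ^ 2)) * y)
    with (sqrt 8 * sqrt 8 * y / (1 + y ^ 2) ^ 2) by (field; lra).
  rewrite sqrt_sqrt by lra. field. lra.
Qed.

Lemma ind_pos_1 (t : R) : 0 < t -> ind_pos t = 1.
Proof. intros H. unfold ind_pos. destruct (Rlt_dec 0 t); lra. Qed.

Lemma ind_pos_0 (t : R) : t <= 0 -> ind_pos t = 0.
Proof. intros H. unfold ind_pos. destruct (Rlt_dec 0 t); lra. Qed.

(* [is_RInt_ext] states its pointwise equalities in the carrier of
   [R_NormedModule], which [ring] and [field] do not recognise as [R]. *)
Ltac R_eq := match goal with |- @eq _ ?a ?b => change (@eq R a b) end.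

Lemma is_RInt_Q_G_L (y' y : R) : 0 < y' -> 0 <= y ->
  is_RInt (fun s => Q s * G_L I_Q s y' * s) 0 y
    (if Rle_dec y y' then 0 else - D_Q y y' / Q y').
Proof.
  intros Hy' Hy. pose proof (Q_pos y') as Qy'.
  assert (Hzero : forall z, 0 <= z <= y' -> is_RInt (fun s => Q s * G_L I_Q s y' * s) 0 z 0).
  { intros z Hz. apply (is_RInt_ext (fun _ => 0)); [| apply is_RInt_zero].
    intros s Hs. rewrite Rmin_left, Rmax_right in Hs by lra.
    unfold G_L. rewrite ind_pos_0 by lra. R_eq. ring. }
  destruct (Rle_dec y y') as [Hle|Hlt]; [apply Hzero; lra|].
  set (W := fun t => - / Q y' * D_Q t y').
  assert (Hright : is_RInt (fun s => Q s * G_L I_Q s y' * s) y' y (minus (W y) (W y'))).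
  { apply (is_RInt_ext (fun s => - / Q y' * (-2 * S_Q s * I_Q s y' / s))).
    { intros s Hs. rewrite Rmin_left, Rmax_right in Hs by lra.
      unfold G_L. rewrite ind_pos_1 by lra.
      replace (Q s * (1 * (Q s / Q y') * I_Q s y') * s)
        with (Q s * Q s * s * I_Q s y' / Q y') by (field; lra).
      rewrite Q_sq_mul by lra. R_eq. field. lra. }
    apply (is_RInt_derive W); intros s Hs; rewrite Rmin_left, Rmax_right in Hs by lra.
    - apply is_derive_scal, is_derive_D_Q. lra.
    - apply ex_derive_continuous_R.
      unfold I_Q, F_Q, S_Q. pose proof (one_plus_sq_pos s).
      auto_derive. repeat split; nra. }
  replace (- D_Q y y' / Q y') with (plus 0 (minus (W y) (W y')))
    by (unfold W, minus, plus, opp; simpl; rewrite D_Q_diag; field; lra).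
  exact (is_RInt_Chasles _ 0 y' y _ _ (Hzero y' ltac:(lra)) Hright).
Qed.

Lemma is_derive_Q (t : R) : 0 < t -> is_derive Q t (Atheta t / t * Q t).
Proof.
  intros Ht. unfold Q, Atheta. pose proof (one_plus_sq_pos t).
  auto_derive; [lra | field; lra].
Qed.

Lemma continuous_Q (t : R) : continuous Q t.
Proof.
  apply ex_derive_continuous_R. unfold Q. pose proof (one_plus_sq_pos t).
  auto_derive. lra.
Qed.

Lemma continuous_Atheta_div (t : R) : 0 < t -> continuous (fun t => Atheta t / t) t.
Proof.
  intros Ht. apply ex_derive_continuous_R. unfold Atheta.
  pose proof (one_plus_sq_pos t). auto_derive. lra.
Qed.

Lemma outgoing_Green_LQ_I_Q : outgoing_Green_LQ (G_L I_Q).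
Proof.
  intros y' Hy'. split.
  2:{ intros y Hy. unfold G_L. rewrite ind_pos_0 by lra. ring. }
  intros phi a b Ha Hab Hsm Hsu. pose proof (Q_pos y') as Qy'.
  assert (HI : is_RInt (fun y => G_L I_Q y y' * (- Derive phi y - Atheta y / y * phi y)
                 + Q y / y * phi y * RInt (fun s => Q s * G_L I_Q s y' * s) 0 y) a b (phi y')).
  { apply (is_RInt_test_jump phi (fun t => / Q y' * (Q t * I_Q t y'))
      (fun t => / Q y' * (Atheta t / t * Q t * I_Q t y' + Q t * (D_Q t y' / t)))); auto.
    - intros t Ht. apply is_derive_scal.
      exact (Derive.is_derive_mult Q (fun t => I_Q t y') t _ _
               (is_derive_Q t Ht) (is_derive_I_Q t y' Ht)).
    - intros t Ht. apply ex_derive_continuous_R.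
      unfold Q, Atheta, I_Q, D_Q, F_Q, S_Q. pose proof (one_plus_sq_pos t).
      auto_derive. repeat split; nra.
    - rewrite I_Q_diag. field. lra.
    - intros t Ht. rewrite (is_RInt_unique _ _ _ _ (is_RInt_Q_G_L y' t Hy' ltac:(lra))).
      destruct (Rle_dec t y'); [|lra]. unfold G_L. rewrite ind_pos_0 by lra. ring.
    - intros t Ht. rewrite (is_RInt_unique _ _ _ _ (is_RInt_Q_G_L y' t Hy' ltac:(lra))).
      destruct (Rle_dec t y'); [lra|]. unfold G_L. rewrite ind_pos_1 by lra. field. lra. }
  split; [intros y Hy; eexists; apply is_RInt_Q_G_L; lra |].
  split; [eexists; exact HI | exact (is_RInt_unique _ _ _ _ HI)].
Qed.

Lemma outgoing_Green_iLQ_G_iL : outgoing_Green_iLQ G_iL.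
Proof.
  intros y' Hy'. split.
  2:{ intros y Hy. unfold G_iL. rewrite ind_pos_0 by lra. ring. }
  intros phi a b Ha Hab Hsm Hsu. pose proof (Q_pos y') as Qy'.
  assert (HI : is_RInt (fun y => G_iL y y' * (- Derive phi y - Atheta y / y * phi y)) a b (phi y')).
  { apply (is_RInt_test_jump phi (fun t => / Q y' * Q t) (fun t => / Q y' * (Atheta t / t * Q t)));
      auto.
    - intros t Ht. apply is_derive_scal, is_derive_Q, Ht.
    - intros t Ht. apply (continuous_mult (fun _ => / Q y')); [apply continuous_const |].
      apply (continuous_mult (fun t => Atheta t / t));
        [apply continuous_Atheta_div, Ht | apply continuous_Q].
    - field. lra.
    - intros t Ht. unfold G_iL. rewrite ind_pos_0 by lra. ring.
    - intros t Ht. unfold G_iL. rewrite ind_pos_1 by lra. field. lra. }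
  split; [eexists; exact HI | exact (is_RInt_unique _ _ _ _ HI)].
Qed.

Lemma ln_le_sub_1 (x : R) : 0 < x -> ln x <= x - 1.
Proof. intros Hx. pose proof (exp_ineq1_le (ln x)). rewrite exp_ln in H; lra. Qed.

Lemma ln_nonneg (x : R) : 1 <= x -> 0 <= ln x.
Proof. intros H. rewrite <- ln_1. apply ln_le; lra. Qed.

Lemma jb_sq (a : R) : jb a ^ 2 = 1 + a ^ 2.
Proof. unfold jb. apply pow2_sqrt. pose proof (one_plus_sq_pos a). lra. Qed.

Lemma jb_pos (a : R) : 0 < jb a.
Proof. unfold jb. apply sqrt_lt_R0, one_plus_sq_pos. Qed.

Lemma jb_ge_1 (a : R) : 1 <= jb a.
Proof. pose proof (jb_sq a). pose proof (jb_pos a). nra. Qed.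

Lemma jb_ge (a : R) : a <= jb a.
Proof. pose proof (jb_sq a). pose proof (jb_pos a). nra. Qed.

Lemma wlog_ge_1 (y y' : R) : 1 <= wlog y y'.
Proof.
  unfold wlog. pose proof (jb_pos y). pose proof (jb_pos y').
  assert (0 <= ln (2 + jb y / jb y')).
  { apply ln_nonneg. assert (0 < jb y / jb y') by (apply Rdiv_lt_0_compat; lra). lra. }
  assert (0 < / jb y' ^ 2) by (apply Rinv_0_lt_compat, pow_lt; lra).
  nra.
Qed.

Lemma Rabs_F_Q_le_1 (y : R) : Rabs (F_Q y) <= 1.
Proof.
  unfold F_Q. pose proof (one_plus_sq_pos y). apply Rabs_le. split.
  - assert (2 / (1 + y ^ 2) <= 2) by (apply Rle_div_l; nra). lra.
  - assert (0 <= 2 / (1 + y ^ 2)) by (apply Rle_mult_inv_pos; lra). lra.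
Qed.

Lemma S_Q_ge_0 (y : R) : 0 <= S_Q y.
Proof. unfold S_Q. apply Rle_mult_inv_pos; [nra | apply pow_lt, one_plus_sq_pos]. Qed.

Lemma S_Q_le_jb (y : R) : S_Q y <= 4 / jb y ^ 2.
Proof.
  unfold S_Q. rewrite jb_sq. pose proof (one_plus_sq_pos y).
  apply (Rmult_le_reg_r ((1 + y ^ 2) ^ 2)); [apply pow_lt; lra |].
  field_simplify; lra.
Qed.

Lemma S_Q_mul_jb_div_le (y : R) : 0 < y -> S_Q y * (jb y / y) <= 4.
Proof.
  intros Hy. pose proof (jb_pos y). pose proof (jb_ge y). pose proof (jb_ge_1 y).
  unfold S_Q. rewrite <- jb_sq.
  replace (4 * y ^ 2 / (jb y ^ 2) ^ 2 * (jb y / y)) with (4 * (y / jb y) / jb y ^ 2)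
    by (field; lra).
  assert (y / jb y <= 1) by (apply Rle_div_l; lra).
  apply Rle_div_l; nra.
Qed.

(* [ln y - ln y'] splits as [(ln y - ln <y>) + (ln <y> - ln <y'>) + (ln <y'> - ln y')]. *)
Lemma log_ratio_le (y y' : R) : 0 < y' -> y' <= y ->
  ln y - ln y' <= ln (2 + jb y / jb y') + jb y' / y'.
Proof.
  intros Hy' Hyy'. pose proof (jb_pos y). pose proof (jb_pos y').
  pose proof (jb_ge y). pose proof (jb_ge y').
  assert (ln y <= ln (jb y)) by (apply ln_le; lra).
  assert (ln (jb y) - ln (jb y') <= ln (2 + jb y / jb y')).
  { rewrite <- ln_div by lra. apply ln_le; [apply Rdiv_lt_0_compat |]; lra. }
  assert (ln (jb y') - ln y' <= jb y' / y').
  { rewrite <- ln_div by lra. pose proof (ln_le_sub_1 (jb y' / y')).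
    assert (0 < jb y' / y') by (apply Rdiv_lt_0_compat; lra). lra. }
  lra.
Qed.

Lemma Rabs_I_Q_le (y y' : R) : 0 < y' -> y' < y -> Rabs (I_Q y y') <= 9 * wlog y y'.
Proof.
  intros Hy' Hyy'.
  set (L := ln y - ln y').
  assert (HL : 0 <= L) by (unfold L; pose proof (ln_increasing y' y Hy' Hyy'); lra).
  pose proof (Rabs_F_Q_le_1 y) as Fy. pose proof (Rabs_F_Q_le_1 y') as Fy'.
  pose proof (S_Q_ge_0 y') as S0. pose proof (S_Q_le_jb y') as S1.
  pose proof (S_Q_mul_jb_div_le y' Hy') as S2. pose proof (jb_ge_1 y').
  pose proof (log_ratio_le y y' Hy' ltac:(lra)) as HLM. fold L in HLM.
  set (M := ln (2 + jb y / jb y')) in HLM.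
  assert (HM : 0 <= M).
  { apply ln_nonneg. pose proof (jb_pos y). pose proof (jb_pos y').
    assert (0 < jb y / jb y') by (apply Rdiv_lt_0_compat; lra). lra. }
  assert (HW : wlog y y' = 1 + / jb y' ^ 2 * M) by reflexivity.
  assert (A1 : Rabs (F_Q y * F_Q y') <= 1).
  { rewrite Rabs_mult. pose proof (Rabs_pos (F_Q y)). pose proof (Rabs_pos (F_Q y')). nra. }
  assert (A2 : Rabs (S_Q y' * (1 - F_Q y * L)) <= S_Q y' * (1 + L)).
  { rewrite Rabs_mult, (Rabs_right (S_Q y')) by lra. apply Rmult_le_compat_l; auto.
    eapply Rle_trans; [apply Rabs_triang |].
    rewrite Rabs_Ropp, Rabs_R1, Rabs_mult, (Rabs_right L) by lra.
    pose proof (Rabs_pos (F_Q y)). nra. }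
  assert (A3 : S_Q y' * L <= 4 / jb y' ^ 2 * M + 4).
  { assert (S_Q y' * L <= S_Q y' * M + S_Q y' * (jb y' / y')) by nra.
    assert (S_Q y' * M <= 4 / jb y' ^ 2 * M) by (apply Rmult_le_compat_r; auto). lra. }
  assert (4 / jb y' ^ 2 <= 4) by (apply Rle_div_l; nra).
  unfold I_Q. fold L. eapply Rle_trans; [apply Rabs_triang |].
  rewrite HW. unfold Rdiv in *. nra.
Qed.

Lemma D_Q_closed_form (y y' : R) : 0 < y -> 0 < y' -> D_Q y y' =
  - (4 * (y ^ 2 - y' ^ 2) * (y ^ 2 * y' ^ 2 + 1) + 16 * y ^ 2 * y' ^ 2 * (ln y - ln y'))
  / ((1 + y ^ 2) ^ 2 * (1 + y' ^ 2) ^ 2).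
Proof.
  intros. unfold D_Q, S_Q, F_Q.
  pose proof (one_plus_sq_pos y). pose proof (one_plus_sq_pos y'). field. lra.
Qed.

Lemma D_Q_numerator_bounds (y y' : R) : 0 < y' -> y' < y ->
  let p := y ^ 2 in let q := y' ^ 2 in
  0 <= 4 * (p - q) * (p * q + 1) + 16 * p * q * (ln y - ln y') <=
  (y - y') / y * (8 * p * (1 + p) * (1 + q) + 16 * p * p).
Proof.
  intros Hy' Hyy' p q.
  set (L := ln y - ln y'). set (e := (y - y') / y).
  assert (Hp : 0 < p) by (unfold p; nra). assert (Hq : 0 < q) by (unfold q; nra).
  assert (Hpq : q < p) by (unfold p, q; nra).
  assert (HL : 0 <= L) by (unfold L; pose proof (ln_increasing y' y Hy' Hyy'); lra).
  assert (HL2 : L <= (y - y') / y').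
  { unfold L. rewrite <- ln_div by lra.
    pose proof (ln_le_sub_1 (y / y') ltac:(apply Rdiv_lt_0_compat; lra)).
    replace ((y - y') / y') with (y / y' - 1) by (field; lra). lra. }
  assert (C1 : 4 * (p - q) * (p * q + 1) <= e * (8 * p * (1 + p) * (1 + q))).
  { assert (E1 : e * p = (y - y') * y) by (unfold e, p; field; lra).
    assert (E2 : p - q = (y - y') * (y + y')) by (unfold p, q; ring).
    rewrite E2. replace (e * (8 * p * (1 + p) * (1 + q))) with (8 * (e * p) * ((1 + p) * (1 + q)))
      by ring.
    rewrite E1. assert (p * q + 1 <= (1 + p) * (1 + q)) by nra.
    assert ((y - y') * (y + y') <= (y - y') * (2 * y)) by nra.
    assert (0 <= (y - y') * (y + y')) by nra. assert (0 <= p * q + 1) by nra. nra. }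
  assert (C2 : 16 * p * q * L <= e * (16 * p * p)).
  { assert (16 * p * q * L <= 16 * p * q * ((y - y') / y')) by (apply Rmult_le_compat_l; nra).
    assert (16 * p * q * ((y - y') / y') = 16 * p * y' * (y - y')) by (unfold q; field; lra).
    assert (e * (16 * p * p) = 16 * p * y * (y - y')) by (unfold e, p; field; lra).
    assert (16 * p * y' * (y - y') <= 16 * p * y * (y - y')) by (apply Rmult_le_compat_r; nra).
    lra. }
  split; [| lra].
  assert (0 <= p * q * L) by (apply Rmult_le_pos; nra).
  assert (0 <= (p - q) * (p * q + 1)) by (apply Rmult_le_pos; nra). nra.
Qed.

Lemma Rabs_D_Q_le (y y' : R) : 0 < y' -> y' < y ->
  Rabs (D_Q y y') <= 24 * ((y - y') / y * Rmin (y ^ 2 / jb y ^ 2) (/ jb y' ^ 2)).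
Proof.
  intros Hy' Hyy'. rewrite !jb_sq, D_Q_closed_form by lra.
  destruct (D_Q_numerator_bounds y y' Hy' Hyy') as [N0 N1].
  set (p := y ^ 2) in *. set (q := y' ^ 2) in *.
  set (N := 4 * (p - q) * (p * q + 1) + 16 * p * q * (ln y - ln y')) in *.
  set (e := (y - y') / y) in *.
  assert (Hp : 0 < p) by (unfold p; nra). assert (Hq : 0 < q) by (unfold q; nra).
  assert (He : 0 < e) by (unfold e; apply Rdiv_lt_0_compat; lra).
  set (den := (1 + p) ^ 2 * (1 + q) ^ 2).
  assert (Hden : 0 < den) by (unfold den; apply Rmult_lt_0_compat; apply pow_lt; lra).
  replace (Rabs (- N / den)) with (N / den)
    by (unfold Rdiv; rewrite Rabs_mult, Rabs_Ropp, Rabs_right, (Rabs_right (/ den));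
        [reflexivity | left; apply Rinv_0_lt_compat |]; lra).
  apply (Rle_trans _ (e * ((8 * p * (1 + p) * (1 + q) + 16 * p * p) / den))).
  { unfold Rdiv. rewrite <- Rmult_assoc.
    apply Rmult_le_compat_r; [left; apply Rinv_0_lt_compat |]; lra. }
  set (m := Rmin (p / (1 + p)) (/ (1 + q))).
  replace (24 * (e * m)) with (e * (24 * m)) by ring.
  apply Rmult_le_compat_l; [lra |]. unfold m.
  apply Rmin_case; apply Rle_div_l; try lra; unfold den.
  - replace (24 * (p / (1 + p)) * ((1 + p) ^ 2 * (1 + q) ^ 2))
      with (24 * p * (1 + p) * (1 + q) ^ 2) by (field; lra).
    assert (0 <= p * (1 + p) * q) by nra. assert (0 <= p * (1 + p) * q * q) by nra. nra.
  - replace (24 * / (1 + q) * ((1 + p) ^ 2 * (1 + q) ^ 2))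
      with (24 * (1 + p) ^ 2 * (1 + q)) by (field; lra).
    assert (0 <= p * (1 + p) * q) by nra. assert (0 <= p * p * q) by nra. nra.
Qed.

Lemma Rabs_D_Q_le_24 (y y' : R) : 0 < y' -> y' < y -> Rabs (D_Q y y') <= 24.
Proof.
  intros Hy' Hyy'. eapply Rle_trans; [apply Rabs_D_Q_le; auto |].
  assert (0 <= (y - y') / y <= 1)
    by (split; [apply Rle_mult_inv_pos | apply Rle_div_l]; lra).
  pose proof (jb_ge_1 y'). pose proof (jb_ge_1 y).
  assert (0 <= Rmin (y ^ 2 / jb y ^ 2) (/ jb y' ^ 2) <= 1).
  { split.
    - apply Rmin_glb; [apply Rle_mult_inv_pos; [nra | apply pow_lt; lra] |].
      left. apply Rinv_0_lt_compat, pow_lt. lra.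
    - eapply Rle_trans; [apply Rmin_r |]. rewrite <- Rinv_1. apply Rinv_le_contravar; nra. }
  nra.
Qed.

Definition monom : Type := R * nat * nat.

Definition eval_monom (m : monom) (y : R) : R :=
  let '(c, a, n) := m in c * y ^ a / (1 + y ^ 2) ^ n.

Fixpoint eval_sum (L : list monom) (y : R) : R :=
  match L with
  | [] => 0
  | m :: L' => eval_monom m y + eval_sum L' y
  end.

Definition deriv_monom (m : monom) : list monom :=
  let '(c, a, n) := m in [(c * INR a, pred a, n); (-2 * INR n * c, S a, S n)].

Definition deriv_sum (L : list monom) : list monom := flat_map deriv_monom L.

Definition mul_monom (m : monom) (L : list monom) : list monom :=
  let '(c, a, n) := m in
  map (fun m' : monom => let '(c', a', n') := m' in (c * c', (a + a')%nat, (n + n')%nat)) L.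

Definition yderiv_sum (L : list monom) : list monom := mul_monom (1, 1%nat, 0%nat) (deriv_sum L).

Lemma eval_sum_app (L1 L2 : list monom) (y : R) :
  eval_sum (L1 ++ L2) y = eval_sum L1 y + eval_sum L2 y.
Proof. induction L1 as [|m L IH]; simpl; [ring | rewrite IH; ring]. Qed.

Lemma eval_mul_monom (m : monom) (L : list monom) (y : R) :
  eval_sum (mul_monom m L) y = eval_monom m y * eval_sum L y.
Proof.
  destruct m as [[c a] n]. induction L as [|[[c' a'] n'] L IH]; simpl in *; [ring |].
  rewrite IH, !pow_add. pose proof (one_plus_sq_pos y).
  assert ((1 + y ^ 2) ^ n <> 0) by (apply pow_nonzero; lra).
  assert ((1 + y ^ 2) ^ n' <> 0) by (apply pow_nonzero; lra).
  field. auto.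
Qed.

Lemma is_derive_eval_monom (m : monom) (y : R) :
  is_derive (eval_monom m) y (eval_sum (deriv_monom m) y).
Proof.
  destruct m as [[c a] n]. unfold eval_monom. simpl.
  pose proof (one_plus_sq_pos y). assert (Hn : (1 + y ^ 2) ^ n <> 0) by (apply pow_nonzero; lra).
  auto_derive; auto.
  replace (1 + y * (y * 1)) with (1 + y ^ 2) by ring.
  set (z := 1 + y ^ 2) in *. clearbody z.
  destruct n as [|n]; [simpl; field; lra |].
  assert (z ^ n <> 0) by (apply pow_nonzero; lra).
  rewrite S_INR. replace (z ^ S n) with (z * z ^ n) by reflexivity.
  simpl pred. field. split; auto. lra.
Qed.

Lemma is_derive_eval_sum (L : list monom) (y : R) :
  is_derive (eval_sum L) y (eval_sum (deriv_sum L) y).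
Proof.
  induction L as [|m L IH]; simpl.
  - apply (is_derive_const 0).
  - rewrite eval_sum_app. apply (is_derive_plus (eval_monom m)); auto.
    apply is_derive_eval_monom.
Qed.

Lemma eval_yderiv_sum (L : list monom) (y : R) :
  eval_sum (yderiv_sum L) y = y * eval_sum (deriv_sum L) y.
Proof. unfold yderiv_sum. rewrite eval_mul_monom. simpl. field. Qed.

Lemma Derive_n_eval_sum (j : nat) (L : list monom) (y : R) :
  Derive_n (eval_sum L) j y = eval_sum (Nat.iter j deriv_sum L) y.
Proof.
  revert y. induction j as [|j IH]; intros y; [reflexivity |].
  simpl. rewrite (Derive_ext _ _ _ IH). apply is_derive_unique, is_derive_eval_sum.
Qed.

Lemma ex_derive_n_eval_sum (j : nat) (L : list monom) (y : R) : ex_derive_n (eval_sum L) j y.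
Proof.
  destruct j as [|j]; [exact I |]. simpl.
  apply (ex_derive_ext (eval_sum (Nat.iter j deriv_sum L))).
  - intros t. symmetry. apply Derive_n_eval_sum.
  - eexists. apply is_derive_eval_sum.
Qed.

(* [(y d/dy)^k I_Q = A_k I_Q + B_k D_Q], using [y d/dy I_Q = D_Q] and [y d/dy D_Q = -2 S_Q I_Q];
   the monomial [(-8, 2, 2)] is [-2 S_Q]. *)
Fixpoint coeffs (k : nat) : list monom * list monom :=
  match k with
  | O => ([(1, 0%nat, 0%nat)], [])
  | S k => let (A, B) := coeffs k in
           (yderiv_sum A ++ mul_monom (-8, 2%nat, 2%nat) B, A ++ yderiv_sum B)
  end.

Lemma yDy_iter_I_Q (k : nat) (y y' : R) : 0 < y ->
  yDy_iter k I_Q y y' =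
    eval_sum (fst (coeffs k)) y * I_Q y y' + eval_sum (snd (coeffs k)) y * D_Q y y'.
Proof.
  revert y. induction k as [|k IH]; intros y Hy; [simpl; field |].
  change (yDy_iter (S k) I_Q y y') with (y * Derive (fun t => yDy_iter k I_Q t y') y).
  set (A := fst (coeffs k)). set (B := snd (coeffs k)).
  rewrite (Derive_ext_loc _ (fun t => eval_sum A t * I_Q t y' + eval_sum B t * D_Q t y')).
  2:{ destruct (locally_pos y Hy) as [e He]. exists e. intros t Ht. apply IH, He, Ht. }
  assert (Hd : is_derive (fun t => eval_sum A t * I_Q t y' + eval_sum B t * D_Q t y') y
    (eval_sum (deriv_sum A) y * I_Q y y' + eval_sum A y * (D_Q y y' / y)
     + (eval_sum (deriv_sum B) y * D_Q y y' + eval_sum B y * (-2 * S_Q y * I_Q y y' / y)))).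
  { apply (is_derive_plus (fun t => eval_sum A t * I_Q t y') (fun t => eval_sum B t * D_Q t y')).
    - apply (Derive.is_derive_mult (eval_sum A) (fun t => I_Q t y'));
        [apply is_derive_eval_sum | apply is_derive_I_Q, Hy].
    - apply (Derive.is_derive_mult (eval_sum B) (fun t => D_Q t y'));
        [apply is_derive_eval_sum | apply is_derive_D_Q, Hy]. }
  apply is_derive_unique in Hd.
  match type of Hd with _ = ?v => replace (Derive _ y) with v by exact (eq_sym Hd) end.
  unfold A, B. cbn [coeffs]. destruct (coeffs k) as [A0 B0]. cbn [fst snd].
  rewrite !eval_sum_app, eval_mul_monom, !eval_yderiv_sum.
  pose proof (one_plus_sq_pos y). unfold S_Q. simpl. field. split; nra.
Qed.

(* [decaying i L]: each monomial of [L], multiplied by [y ^ i], is [O(y^2 / (1 + y^4))]. *)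
Definition decaying_monom (i : nat) (m : monom) : Prop :=
  let '(c, a, n) := m in c = 0 \/ (2 <= a + i /\ a + 2 + i <= 2 * n)%nat.

Definition decaying (i : nat) (L : list monom) : Prop := List.Forall (decaying_monom i) L.

Lemma decaying_app (i : nat) (L1 L2 : list monom) :
  decaying i L1 -> decaying i L2 -> decaying i (L1 ++ L2).
Proof. intros H1 H2. apply List.Forall_app; split; auto. Qed.

Lemma decaying_deriv_sum (i : nat) (L : list monom) :
  decaying i L -> decaying (S i) (deriv_sum L).
Proof.
  intros HL. induction HL as [|m L Hm _ IH]; [constructor |].
  change (deriv_sum (m :: L)) with (deriv_monom m ++ deriv_sum L).
  apply decaying_app; [| exact IH]. destruct m as [[c a] n]. simpl in Hm.
  constructor; [| constructor; [| constructor]]; simpl;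
    destruct Hm as [Hc | Hm]; try (left; subst; ring).
  - destruct a; [left; simpl; ring | right; simpl; lia].
  - right; lia.
Qed.

Lemma decaying_mul_monom (i j : nat) (c : R) (b m : nat) (L : list monom) :
  (i <= b + j)%nat -> (b + j <= i + 2 * m)%nat ->
  decaying i L -> decaying j (mul_monom (c, b, m) L).
Proof.
  intros Hij Hji HL. apply List.Forall_map. eapply List.Forall_impl; [| exact HL].
  intros [[c' a] n] [Hc | Hm]; [left; subst; ring | right; lia].
Qed.

Lemma decaying_yderiv_sum (L : list monom) : decaying 0 L -> decaying 0 (yderiv_sum L).
Proof.
  intros HL. apply decaying_mul_monom with 1%nat; [lia | lia | now apply decaying_deriv_sum].
Qed.

Lemma coeffs_decaying (k : nat) :
  decaying 0 (fst (coeffs (S (S k)))) /\ decaying 0 (snd (coeffs (S (S k)))).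
Proof.
  induction k as [|k [HA HB]].
  - split; cbn; repeat (apply List.Forall_cons; [simpl; first [left; ring | right; lia] |]);
      apply List.Forall_nil.
  - change (coeffs (S (S (S k)))) with
      (let (A, B) := coeffs (S (S k)) in
       (yderiv_sum A ++ mul_monom (-8, 2%nat, 2%nat) B, A ++ yderiv_sum B)).
    destruct (coeffs (S (S k))) as [A B]. cbn [fst snd] in *. split.
    + apply decaying_app; [now apply decaying_yderiv_sum |].
      apply decaying_mul_monom with 0%nat; [lia | lia | exact HB].
    + apply decaying_app; [exact HA | now apply decaying_yderiv_sum].
Qed.

Lemma decay_weight_ge_0 (y : R) : 0 <= y ^ 2 / (1 + y ^ 4).
Proof.
  apply Rle_mult_inv_pos; [nra |]. pose proof (pow2_ge_0 (y ^ 2)).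
  replace (y ^ 4) with ((y ^ 2) ^ 2) by ring. lra.
Qed.

Lemma pow_div_bump_pow_le (b n : nat) (y : R) : (2 <= b)%nat -> (b + 2 <= 2 * n)%nat -> 0 < y ->
  y ^ b / (1 + y ^ 2) ^ n <= 2 * (y ^ 2 / (1 + y ^ 4)).
Proof.
  intros Hb Hn Hy. pose proof (one_plus_sq_pos y) as Hp.
  assert (Hq : 0 < (1 + y ^ 2) ^ n) by (apply pow_lt; lra).
  assert (H4 : 0 < 1 + y ^ 4) by (pose proof (pow_le y 4 ltac:(lra)); lra).
  destruct (Rle_dec y 1) as [Hle|Hgt].
  - assert (B1 : y ^ b <= y ^ 2).
    { replace b with (2 + (b - 2))%nat by lia. rewrite pow_add.
      assert (y ^ (b - 2) <= 1) by (rewrite <- (pow1 (b - 2)); apply pow_incr; lra).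
      assert (0 <= y ^ (b - 2)) by (apply pow_le; lra). nra. }
    assert (B2 : y ^ b / (1 + y ^ 2) ^ n <= y ^ 2).
    { assert (1 <= (1 + y ^ 2) ^ n) by (apply pow_R1_Rle; nra).
      assert (0 <= y ^ b) by (apply pow_le; lra).
      apply Rle_div_l; nra. }
    assert (y ^ 4 <= 1) by (rewrite <- (pow1 4); apply pow_incr; lra).
    assert (y ^ 2 <= 2 * (y ^ 2 / (1 + y ^ 4))).
    { assert (2 * (y ^ 2 / (1 + y ^ 4)) - y ^ 2 = y ^ 2 * (1 - y ^ 4) / (1 + y ^ 4))
        by (field; lra).
      assert (0 <= y ^ 2 * (1 - y ^ 4) / (1 + y ^ 4))
        by (apply Rle_mult_inv_pos; [apply Rmult_le_pos |]; nra).
      lra. }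
    lra.
  - destruct n as [|[|m]]; [lia | lia |].
    assert (B1 : y ^ b <= (y ^ 2) ^ S m) by (rewrite <- pow_mult; apply Rle_pow; [lra | lia]).
    assert (B2 : (y ^ 2) ^ S (S m) <= (1 + y ^ 2) ^ S (S m)) by (apply pow_incr; nra).
    assert (P1 : 0 < (y ^ 2) ^ S m) by (apply pow_lt; nra).
    assert (B3 : y ^ b / (1 + y ^ 2) ^ S (S m) <= / y ^ 2).
    { apply Rle_div_l; [lra |].
      assert (E : / y ^ 2 * (y ^ 2) ^ S (S m) = (y ^ 2) ^ S m) by (simpl; field; nra).
      assert (0 <= / y ^ 2) by (left; apply Rinv_0_lt_compat; nra).
      assert (/ y ^ 2 * (y ^ 2) ^ S (S m) <= / y ^ 2 * (1 + y ^ 2) ^ S (S m))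
        by (apply Rmult_le_compat_l; auto).
      lra. }
    assert (/ y ^ 2 <= 2 * (y ^ 2 / (1 + y ^ 4))).
    { replace (2 * (y ^ 2 / (1 + y ^ 4))) with (/ y ^ 2 * (2 * y ^ 4 / (1 + y ^ 4)))
        by (field; split; nra).
      rewrite <- (Rmult_1_r (/ y ^ 2)) at 1.
      apply Rmult_le_compat_l; [left; apply Rinv_0_lt_compat; nra |].
      apply Rle_div_r; [lra |]. assert (1 <= y ^ 4) by (apply pow_R1_Rle; lra). lra. }
    lra.
Qed.

Fixpoint coeff_norm (L : list monom) : R :=
  match L with
  | [] => 0
  | (c, _, _) :: L' => Rabs c + coeff_norm L'
  end.

Lemma coeff_norm_ge_0 (L : list monom) : 0 <= coeff_norm L.
Proof. induction L as [|[[c a] n] L IH]; simpl; [lra |]. pose proof (Rabs_pos c); lra. Qed.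

Lemma Rabs_pow_mul_eval_sum_le (i : nat) (L : list monom) (y : R) : decaying i L -> 0 < y ->
  Rabs (y ^ i * eval_sum L y) <= coeff_norm L * (2 * (y ^ 2 / (1 + y ^ 4))).
Proof.
  intros HL Hy. induction HL as [|[[c a] n] L Hm HL IH]; cbn [eval_sum coeff_norm].
  - rewrite Rmult_0_r, Rabs_R0. lra.
  - rewrite Rmult_plus_distr_l, Rmult_plus_distr_r.
    eapply Rle_trans; [apply Rabs_triang | apply Rplus_le_compat; auto].
    simpl in Hm. unfold eval_monom. pose proof (one_plus_sq_pos y).
    assert (0 < (1 + y ^ 2) ^ n) by (apply pow_lt; lra).
    destruct Hm as [Hc | [H1 H2]].
    + subst. unfold Rdiv. rewrite !Rmult_0_l, Rmult_0_r, Rabs_R0. lra.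
    + replace (y ^ i * (c * y ^ a / (1 + y ^ 2) ^ n)) with (c * (y ^ (a + i) / (1 + y ^ 2) ^ n))
        by (rewrite pow_add; unfold Rdiv; ring).
      rewrite Rabs_mult, (Rabs_right (y ^ (a + i) / (1 + y ^ 2) ^ n)).
      2:{ apply Rle_ge, Rle_mult_inv_pos; [apply pow_le |]; lra. }
      apply Rmult_le_compat_l; [apply Rabs_pos |]. apply pow_div_bump_pow_le; auto; lia.
Qed.

Lemma Rabs_eval_sum_le (L : list monom) (y : R) : decaying 0 L -> 0 < y ->
  Rabs (eval_sum L y) <= coeff_norm L * (2 * (y ^ 2 / (1 + y ^ 4))).
Proof.
  intros HL Hy. rewrite <- (Rmult_1_l (eval_sum L y)).
  exact (Rabs_pow_mul_eval_sum_le 0 L y HL Hy).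
Qed.

Lemma Rabs_yDy_iter_I_Q_le (k : nat) : (2 <= k)%nat ->
  exists C, 0 < C /\ forall y y', 0 < y' -> y' < y ->
  Rabs (yDy_iter k I_Q y y') <= C * (y ^ 2 / (1 + y ^ 4) * wlog y y').
Proof.
  intros Hk. destruct k as [|[|k]]; [lia | lia |].
  destruct (coeffs_decaying k) as [HA HB].
  set (A := fst (coeffs (S (S k)))) in *. set (B := snd (coeffs (S (S k)))) in *.
  pose proof (coeff_norm_ge_0 A). pose proof (coeff_norm_ge_0 B).
  exists (18 * coeff_norm A + 48 * coeff_norm B + 1). split; [lra |].
  intros y y' Hy' Hyy'. rewrite yDy_iter_I_Q by lra. fold A B.
  pose proof (Rabs_eval_sum_le A y HA ltac:(lra)) as BA.
  pose proof (Rabs_eval_sum_le B y HB ltac:(lra)) as BB.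
  pose proof (Rabs_I_Q_le y y' Hy' Hyy') as BI. pose proof (Rabs_D_Q_le_24 y y' Hy' Hyy') as BD.
  pose proof (wlog_ge_1 y y'). pose proof (decay_weight_ge_0 y).
  set (h := y ^ 2 / (1 + y ^ 4)) in *. set (w := wlog y y') in *.
  eapply Rle_trans; [apply Rabs_triang |]. rewrite !Rabs_mult.
  assert (Rabs (eval_sum A y) * Rabs (I_Q y y') <= coeff_norm A * (2 * h) * (9 * w))
    by (apply Rmult_le_compat; auto; apply Rabs_pos).
  assert (Rabs (eval_sum B y) * Rabs (D_Q y y') <= coeff_norm B * (2 * h) * (24 * w))
    by (apply Rmult_le_compat; try apply Rabs_pos; lra).
  assert (0 <= h * w) by nra.
  nra.
Qed.

Lemma elem_near_diag (f : R -> R -> R) (y0 eps : R) : elem f -> 0 < y0 -> 0 < eps ->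
  exists delta, 0 < delta /\ forall y y', Rabs (y - y0) < delta -> Rabs (y' - y0) < delta ->
    Rabs (f y y' - f y0 y0) < eps.
Proof.
  intros Hf Hy0 Heps.
  destruct (elem_continuous f Hf y0 y0 (conj Hy0 Hy0) (ball (f y0 y0) (mkposreal eps Heps)))
    as [d Hd]; [now exists (mkposreal eps Heps) |].
  exists d. split; [apply cond_pos |]. intros y y' Hy Hy'. exact (Hd (y, y') (conj Hy Hy')).
Qed.

Lemma elem_continuous_snd (f : R -> R -> R) (x y : R) : elem f -> quadrant x y ->
  continuous (fun t => f x t) y.
Proof. intros Hf Hxy. apply ex_derive_continuous_R, (proj1 (elem_partials f Hf) x y Hxy). Qed.

Lemma yDy_iter_I_Q_at_diag (k : nat) (y : R) : 0 < y ->
  filterlim (fun y' => yDy_iter k I_Q y y') (at_left y) (locally (eval_sum (fst (coeffs k)) y)).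
Proof.
  intros Hy.
  set (g := fun y' =>
    eval_sum (fst (coeffs k)) y * I_Q y y' + eval_sum (snd (coeffs k)) y * D_Q y y').
  apply (filterlim_ext g); [intros y'; symmetry; apply yDy_iter_I_Q, Hy |].
  apply (filterlim_filter_le_1 g (filter_le_within (F := locally y) (fun u : R => u < y))).
  replace (eval_sum (fst (coeffs k)) y) with (g y) by (unfold g; rewrite I_Q_diag, D_Q_diag; ring).
  apply (elem_continuous_snd (fun x t =>
    eval_sum (fst (coeffs k)) y * I_Q x t + eval_sum (snd (coeffs k)) y * D_Q x t));
    [| split; exact Hy].
  exact (elem_plus _ _ (elem_mult _ _ (elem_const _) elem_I_Q)
                       (elem_mult _ _ (elem_const _) elem_D_Q)).
Qed.

Lemma uniform_bound_upto (P : nat -> R -> Prop) :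
  (forall j C C', C <= C' -> P j C -> P j C') -> (forall j, exists C, 0 < C /\ P j C) ->
  forall l, exists C, 0 < C /\ forall j, (j <= l)%nat -> P j C.
Proof.
  intros Hmono Hex l. induction l as [|l [C [HC HP]]].
  - destruct (Hex 0%nat) as [C [HC HP]]. exists C. split; auto.
    intros j Hj. replace j with 0%nat by lia. exact HP.
  - destruct (Hex (S l)) as [C' [HC' HP']]. exists (C + C'). split; [lra |].
    intros j Hj. destruct (Nat.eq_dec j (S l)) as [-> | Hne].
    + apply (Hmono _ C'); [lra | exact HP'].
    + apply (Hmono _ C); [lra | apply HP; lia].
Qed.

Lemma decaying_iter_deriv_sum (j : nat) (L : list monom) :
  decaying 0 L -> decaying j (Nat.iter j deriv_sum L).
Proof. intros HL. induction j as [|j IH]; [exact HL | now apply decaying_deriv_sum]. Qed.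

Lemma eval_sum_symbol_bounds (L : list monom) (l : nat) : decaying 0 L ->
  exists C, 0 < C /\ forall y, 0 < y -> forall j, (j <= l)%nat ->
    ex_derive_n (eval_sum L) j y /\
    Rabs (y ^ j * Derive_n (eval_sum L) j y) <= C * (y ^ 2 / (1 + y ^ 4)).
Proof.
  intros HL.
  destruct (uniform_bound_upto (fun j C => forall y, 0 < y ->
    Rabs (y ^ j * Derive_n (eval_sum L) j y) <= C * (y ^ 2 / (1 + y ^ 4)))) with l as [C [HC HP]].
  - intros j C C' HCC' HP y Hy. eapply Rle_trans; [apply HP, Hy |].
    apply Rmult_le_compat_r; [apply decay_weight_ge_0 | exact HCC'].
  - intros j. exists (2 * coeff_norm (Nat.iter j deriv_sum L) + 1).
    split; [pose proof (coeff_norm_ge_0 (Nat.iter j deriv_sum L)); lra |].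
    intros y Hy. rewrite Derive_n_eval_sum.
    pose proof (Rabs_pow_mul_eval_sum_le j _ y (decaying_iter_deriv_sum j L HL) Hy).
    pose proof (decay_weight_ge_0 y). nra.
  - exists C. split; auto. intros y Hy j Hj.
    split; [apply ex_derive_n_eval_sum | apply HP; auto].
Qed.

Theorem proposition3p4 :
  exists I : R -> R -> R,
    smooth_on (fun y y' => 0 < y' /\ y' < y) I /\
    outgoing_Green_LQ (G_L I) /\
    outgoing_Green_iLQ G_iL /\
    (* (1), k = 0 *)
    (exists C, 0 < C /\ forall y y', 0 < y' -> y' < y ->
        Rabs (I y y') <= C * wlog y y') /\
    (* (1), k = 1 *)
    (exists C, 0 < C /\ forall y y', 0 < y' -> y' < y ->
        Rabs (yDy I y y') <=
          C * ((y - y') / y * Rmin (y ^ 2 / (jb y) ^ 2) (/ (jb y') ^ 2))) /\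
    (* (1), k >= 2 *)
    (forall k : nat, (2 <= k)%nat -> exists C, 0 < C /\ forall y y', 0 < y' -> y' < y ->
        Rabs (yDy_iter k I y y') <= C * (y ^ 2 / (1 + y ^ 4) * wlog y y')) /\
    (* (2): limits on the diagonal, approached from the region 0 < y' < y *)
    (forall y0, 0 < y0 -> forall eps, 0 < eps -> exists delta, 0 < delta /\
        forall y y', 0 < y' -> y' < y -> Rabs (y - y0) < delta -> Rabs (y' - y0) < delta ->
          Rabs (I y y' - 1) < eps) /\
    (forall y0, 0 < y0 -> forall eps, 0 < eps -> exists delta, 0 < delta /\
        forall y y', 0 < y' -> y' < y -> Rabs (y - y0) < delta -> Rabs (y' - y0) < delta ->
          Rabs (yDy I y y') < eps) /\
    (* (2): I^(k)(y) = lim_{y' -> y^-} (y d_y)^k I(y,y') exists and |I^(k)|_l <~ y^2/(1+y^4) *)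
    (forall k : nat, (2 <= k)%nat -> exists Ik : R -> R,
        (forall y, 0 < y -> filterlim (fun y' => yDy_iter k I y y') (at_left y) (locally (Ik y))) /\
        (forall l : nat, exists C, 0 < C /\ forall y, 0 < y -> forall j : nat, (j <= l)%nat ->
            ex_derive_n Ik j y /\
            Rabs (y ^ j * Derive_n Ik j y) <= C * (y ^ 2 / (1 + y ^ 4)))).
Proof.
  exists I_Q.
  split; [intros k; apply elem_Ck; [intros y y' []; split; lra | exact elem_I_Q] |].
  split; [exact outgoing_Green_LQ_I_Q |].
  split; [exact outgoing_Green_iLQ_G_iL |].
  split; [exists 9; split; [lra | exact Rabs_I_Q_le] |].
  split; [exists 24; split; [lra |]; intros y y' Hy' Hyy'; rewrite yDy_I_Q by lra;
          now apply Rabs_D_Q_le |].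
  split; [exact Rabs_yDy_iter_I_Q_le |].
  split.
  { intros y0 Hy0 eps Heps. destruct (elem_near_diag I_Q y0 eps elem_I_Q Hy0 Heps) as [d [Hd H]].
    exists d. split; auto. intros y y' _ _ Hy Hy'. rewrite <- (I_Q_diag y0). auto. }
  split.
  { intros y0 Hy0 eps Heps. destruct (elem_near_diag D_Q y0 eps elem_D_Q Hy0 Heps) as [d [Hd H]].
    exists d. split; auto. intros y y' Hy' Hyy' Hy Hy''. rewrite yDy_I_Q by lra.
    specialize (H y y' Hy Hy''). now rewrite D_Q_diag, Rminus_0_r in H. }
  intros k Hk. exists (eval_sum (fst (coeffs k))).
  split; [intros y Hy; now apply yDy_iter_I_Q_at_diag |].
  intros l. destruct k as [|[|k]]; [lia | lia |].
  exact (eval_sum_symbol_bounds _ l (proj1 (coeffs_decaying k))).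
Qed.
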